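(* Let $L\ge1$ and let $X_1,\ldots,X_L$, $Y_1,\ldots,Y_L$ be operators with $X_l,Y_l$ acting on the same space for each $l$, and set $X=\bigotimes_{l=1}^{L}X_{l}$, $Y=\bigotimes_{l=1}^{L}Y_{l}$. Then for each $a\in\{0,1\}$, $$X+(-1)^{a}Y=\frac{1}{2^{L-1}}\sum_{\substack{\vec{b}\in\{0,1\}^{L}\\ \omega_{2}(\vec{b})=a}}\bigotimes_{l=1}^{L}\big[X_{l}+(-1)^{b_{l}}Y_{l}\big],$$ where $b_l$ is the $l$th entry of $\vec b$ and $\omega_2(\vec b)=\sum_{l=1}^{L}b_l \pmod 2$. *)

From HB Require Import structures.
From mathcomp Require Import all_boot all_order all_algebra.
Set Implicit Arguments. Unset Strict Implicit. Unset Printing Implicit Defensive.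
Import Order.TTheory GRing.Theory Num.Theory.
Local Open Scope ring_scope.

(* Multi-indices for the tensor product of L finite-dimensional spaces of
   dimensions d 0, ..., d (L-1): the computational basis of the tensor
   product space is indexed by tuples (i_0,...,i_{L-1}) with i_l < d l. *)
Definition mindex (L : nat) (d : 'I_L -> nat) :=
  {dffun forall l : 'I_L, 'I_(d l)}.

(* Tensor (Kronecker) product of operators X_0,...,X_{L-1}, X_l acting on
   the d l-dimensional space, given by its matrix entries in the product
   basis:  (X_0 ⊗ ... ⊗ X_{L-1})_{i,j} = prod_l (X_l)_{i_l, j_l}. *)
Definition tensor_op (R : comRingType) (L : nat) (d : 'I_L -> nat)
  (X : forall l : 'I_L, 'M[R]_(d l)) (i j : mindex d) : R :=
  \prod_(l < L) X l (i l) (j l).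

Definition omega2 (L : nat) (b : {ffun 'I_L -> bool}) : bool :=
  odd (\sum_(l < L) (b l : nat))%N.

From HB Require Import structures.
From mathcomp Require Import all_boot all_order all_algebra.
From mathcomp Require Import ring.
Import Order.TTheory GRing.Theory Num.Theory.
Local Open Scope ring_scope.

(* Expanding prod_l (x_l + (-1)^b_l y_l) over all sign patterns b, the cross
   terms cancel: the plain sum keeps 2^L prod_l x_l, and the sum weighted by
   (-1)^omega2(b) = prod_l (-1)^b_l keeps 2^L prod_l y_l.  Since
   1 + (-1)^(a + omega2 b) is 2 on the parity class a and 0 off it, adding
   the two sums gives twice the class-a sum, 2^L (prod x + (-1)^a prod y). *)

Lemma sum_parity_class (R : pzRingType) (I : finType) (p : pred I) (a : bool)
    (F : I -> R) :
  2 * \sum_(i | p i == a) F i =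
    \sum_i F i + (-1) ^+ a * \sum_i (-1) ^+ p i * F i.
Proof.
rewrite [_ * \sum_i _]mulr_sumr -big_split (bigID (fun i => p i == a)) /=.
rewrite [X in _ = _ + X]big1 => [|i /negbTE pia]; last first.
  rewrite mulrA -signr_addb.
  by case: (p i) a pia => -[] //= _; rewrite expr1 mulN1r addrN.
rewrite addr0 mulr_sumr; apply: eq_big => // i /eqP <-.
by rewrite mulrA -signr_addb addbb expr0 mul1r mulr2n mulrDl mul1r.
Qed.

Lemma sign_omega2 (R : pzRingType) (L : nat) (b : {ffun 'I_L -> bool}) :
  (-1) ^+ omega2 b = \prod_(l < L) (-1) ^+ b l :> R.
Proof. by rewrite /omega2 signr_odd (big_morph _ (exprD _) (expr0 _)). Qed.

Section SignPatterns.

Context {R : comPzRingType} {L : nat} (x y : 'I_L -> R).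

Lemma sum_sign_patterns :
  \sum_(b : {ffun 'I_L -> bool}) \prod_(l < L) (x l + (-1) ^+ b l * y l) =
    2 ^+ L * \prod_(l < L) x l.
Proof.
rewrite -(bigA_distr_bigA (fun l (s : bool) => x l + (-1) ^+ s * y l)).
rewrite -[in 2 ^+ L](card_ord L) -prodr_const -big_split /=.
by apply: eq_bigr => l _; rewrite big_bool /= expr1 mulN1r mul1r; ring.
Qed.

Lemma sum_signed_sign_patterns :
  \sum_(b : {ffun 'I_L -> bool})
      (-1) ^+ omega2 b * \prod_(l < L) (x l + (-1) ^+ b l * y l) =
    2 ^+ L * \prod_(l < L) y l.
Proof.
under eq_bigr do rewrite sign_omega2 -big_split /=.
rewrite -(bigA_distr_bigA
  (fun l (s : bool) => (-1) ^+ s * (x l + (-1) ^+ s * y l))).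
rewrite -[in 2 ^+ L](card_ord L) -prodr_const -big_split /=.
by apply: eq_bigr => l _; rewrite big_bool /= expr1 !mulN1r !mul1r; ring.
Qed.

Lemma sum_sign_patterns_parity (a : bool) :
  2 * \sum_(b : {ffun 'I_L -> bool} | omega2 b == a)
        \prod_(l < L) (x l + (-1) ^+ b l * y l) =
    2 ^+ L * (\prod_(l < L) x l + (-1) ^+ a * \prod_(l < L) y l).
Proof.
rewrite sum_parity_class sum_sign_patterns sum_signed_sign_patterns.
by rewrite mulrCA -mulrDr.
Qed.

End SignPatterns.

Lemma tensor_op_lincomb (R : comNzRingType) (L : nat) (d : 'I_L -> nat)
    (X Y : forall l : 'I_L, 'M[R]_(d l)) (c : 'I_L -> R) (i j : mindex d) :
  tensor_op (fun l => X l + c l *: Y l) i j =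
    \prod_(l < L) (X l (i l) (j l) + c l * Y l (i l) (j l)).
Proof. by apply: eq_bigr => l _; rewrite !mxE. Qed.

Theorem lemma4 (R : numFieldType) (L : nat) (hL : (0 < L)%N)
  (d : 'I_L -> nat) (X Y : forall l : 'I_L, 'M[R]_(d l)) (a : bool) :
  forall i j : mindex d,
    tensor_op X i j + (-1) ^+ a * tensor_op Y i j =
    ((2 ^ (L - 1))%:R)^-1 *
      \sum_(b : {ffun 'I_L -> bool} | omega2 b == a)
         tensor_op (fun l => X l + (-1) ^+ (b l) *: Y l) i j.
Proof.
move=> i j; under eq_bigr do rewrite tensor_op_lincomb.
have two_pow : (2 : R) ^+ L = 2 * (2 ^ (L - 1))%:R.
  by rewrite natrX -exprS subn1 prednK.
have nz2 : (2 : R) != 0 by rewrite pnatr_eq0.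
have nz_pow : ((2 ^ (L - 1))%:R : R) != 0 by rewrite pnatr_eq0 expn_eq0.
have := sum_sign_patterns_parity
  (fun l => X l (i l) (j l)) (fun l => Y l (i l) (j l)) a.
rewrite two_pow -mulrA => /(mulfI nz2) ->.
by rewrite (mulKf nz_pow) /tensor_op.
Qed.
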